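(* Let $m\ge 1$. The Lie superalgebra $H_m$ is capable if and only if $m=1$.
   Context: All algebras are over a field $\mathbb{F}$ of characteristic $\neq 2,3$. $H_m$ is the Lie superalgebra with even basis $x_1,\dots,x_m$, odd basis $y_1,\dots,y_m,z$, and nonzero brackets $[x_j,y_j]=z$ ($1\le j\le m$). A Lie superalgebra $L$ is capable if $L\cong H/Z(H)$ for some Lie superalgebra $H$. *)

From HB Require Import structures.
From mathcomp Require Import all_boot all_order all_algebra.
Set Implicit Arguments. Unset Strict Implicit. Unset Printing Implicit Defensive.
Import Order.TTheory GRing.Theory Num.Theory.
Local Open Scope ring_scope.

(* Data of a (possibly infinite-dimensional) Z/2-graded algebra over F:
   a vector space [lsa_car], the projection [lsa_p0] onto the even part
   (the odd part is the kernel of [lsa_p0]), and a bracket [lsa_br]. *)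
Record lsa_data (F : fieldType) := LSAData {
  lsa_car :> lmodType F;
  lsa_p0 : lsa_car -> lsa_car;
  lsa_br : lsa_car -> lsa_car -> lsa_car }.

Definition homog (F : fieldType) (L : lsa_data F) (b : bool) (x : L) : Prop :=
  if b then lsa_p0 x = 0 else lsa_p0 x = x.

Definition is_lsa (F : fieldType) (L : lsa_data F) : Prop :=
      (forall (a : F) (x y : L), lsa_p0 (a *: x + y) = a *: lsa_p0 x + lsa_p0 y) /\
      (forall x : L, lsa_p0 (lsa_p0 x) = lsa_p0 x) /\
      (forall (a : F) (x y z : L), lsa_br (a *: x + y) z = a *: lsa_br x z + lsa_br y z) /\
      (forall (a : F) (x y z : L), lsa_br x (a *: y + z) = a *: lsa_br x y + lsa_br x z) /\
      (forall (a b : bool) (x y : L), homog a x -> homog b y -> homog (a (+) b) (lsa_br x y)) /\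
      (forall (a b : bool) (x y : L), homog a x -> homog b y ->
          lsa_br x y = - (((-1) ^+ (a && b) : F) *: lsa_br y x)) /\
      (forall (a b : bool) (x y z : L), homog a x -> homog b y ->
          lsa_br x (lsa_br y z) =
          lsa_br (lsa_br x y) z + ((-1) ^+ (a && b) : F) *: lsa_br y (lsa_br x z)).

Definition is_lsa_hom (F : fieldType) (L M : lsa_data F) (f : L -> M) : Prop :=
  [/\ (forall (a : F) (x y : L), f (a *: x + y) = a *: f x + f y),
      (forall x : L, f (lsa_p0 x) = lsa_p0 (f x)) &
      (forall x y : L, f (lsa_br x y) = lsa_br (f x) (f y))].

Definition central (F : fieldType) (H : lsa_data F) (x : H) : Prop :=
  forall y : H, lsa_br x y = 0.

(* L is capable iff L ~= H / Z(H) for some Lie superalgebra H; equivalently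
   (first isomorphism theorem) there is a surjective homomorphism H -> L
   whose kernel is exactly Z(H). *)
Definition capable (F : fieldType) (L : lsa_data F) : Prop :=
  exists (H : lsa_data F) (f : H -> L),
    [/\ is_lsa H, is_lsa_hom f, (forall u : L, exists x : H, f x = u) &
        (forall x : H, f x = 0 <-> central x)].

(* The Heisenberg Lie superalgebra H_m, realised on F^(2m+1):
   coordinate j < m is x_j (even), coordinate m + j is y_j (odd),
   coordinate 2m is z (odd).  Only nonzero brackets: [x_j, y_j] = z
   (and hence [y_j, x_j] = -z). *)
Section Hm.
Variables (F : fieldType) (m : nat).
Definition Hm_car : lmodType F := 'rV[F]_(m.*2.+1).
Definition Hm_x (j : nat) : 'I_(m.*2.+1) := inord j.
Definition Hm_y (j : nat) : 'I_(m.*2.+1) := inord (m + j).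
Definition Hm_z : 'I_(m.*2.+1) := inord m.*2.
Definition Hm_p0 (u : Hm_car) : Hm_car :=
  \row_i (if (i < m)%N then (u : 'rV[F]_(m.*2.+1)) 0 i else 0).
Definition Hm_br (u v : Hm_car) : Hm_car :=
  (\sum_(j < m) ((u : 'rV[F]_(m.*2.+1)) 0 (Hm_x j) * (v : 'rV[F]_(m.*2.+1)) 0 (Hm_y j)
                 - (u : 'rV[F]_(m.*2.+1)) 0 (Hm_y j) * (v : 'rV[F]_(m.*2.+1)) 0 (Hm_x j)))
    *: (delta_mx 0 Hm_z : 'rV[F]_(m.*2.+1)).
End Hm.

Definition Hm (F : fieldType) (m : nat) : lsa_data F :=
  @LSAData F (Hm_car F m) (@Hm_p0 F m) (@Hm_br F m).

From mathcomp Require Import all_boot all_order all_algebra.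
From mathcomp Require Import ring zify.
Import GRing.Theory.
Local Open Scope ring_scope.
Set Implicit Arguments. Unset Strict Implicit.

(* For m >= 2, let f : H -> H_m be onto with kernel Z(H); lift x_0, y_0, x_1 to homogeneous
   X_0, Y_0, X_1 and y_1 to some Y_1.  Every bracket of H_m lies in F z, so modulo Z(H) the
   element Z := [X_0, Y_0] equals [X_1, Y_1], the brackets of X_0 and Y_0 with X_1 and Y_1
   vanish, and ad X_0, ad Y_0 take values in F Z.  The super Jacobi identity then gives
   [X_0, Z] = [Y_0, Z] = 0, and with it [Z, w] = 0 for every w: Z is central, yet f Z = z.
   For m = 1, H_1 is the quotient by its centre F e_3 of the superalgebra with e_0 even,
   e_1, e_2, e_3 odd and [e_0, e_1] = e_2, [e_0, e_2] = e_3 as only nonzero brackets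
   (up to super skew-symmetry). *)

Section ScaleAddMorphism.
Variables (F : fieldType) (U V : lmodType F) (g : U -> V).
Hypothesis g_lin : forall (a : F) (x y : U), g (a *: x + y) = a *: g x + g y.

Lemma linD x y : g (x + y) = g x + g y.
Proof. by rewrite -[x]scale1r g_lin !scale1r. Qed.

Lemma linB x y : g (x - y) = g x - g y.
Proof. by rewrite addrC -scaleN1r g_lin scaleN1r addrC. Qed.

Lemma lin0 : g 0 = 0.
Proof. by rewrite -(subrr 0) linB subrr. Qed.

Lemma linZ a x : g (a *: x) = a *: g x.
Proof. by rewrite -[a *: x]addr0 g_lin lin0 addr0. Qed.

End ScaleAddMorphism.

Section LieSuperalgebra.
Variables (F : fieldType) (H : lsa_data F).
Hypothesis hH : is_lsa H.
Local Notation br := (@lsa_br F H).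
Local Notation p0 := (@lsa_p0 F H).

Lemma lsa_p0_lin a (x y : H) : p0 (a *: x + y) = a *: p0 x + p0 y.
Proof. by case: hH. Qed.

Lemma lsa_brl_lin (z : H) a x y : br (a *: x + y) z = a *: br x z + br y z.
Proof. by case: hH => _ [_ []]. Qed.

Lemma lsa_brr_lin (x : H) a y z : br x (a *: y + z) = a *: br x y + br x z.
Proof. by case: hH => _ [_ [_ []]]. Qed.

Lemma lsa_br_homog a b (x y : H) :
  homog a x -> homog b y -> homog (a (+) b) (br x y).
Proof. by case: hH => _ [_ [_ [_ [hpar _]]]]; apply: hpar. Qed.

Lemma lsa_brC a b (x y : H) : homog a x -> homog b y ->
  br x y = - (((-1) ^+ (a && b) : F) *: br y x).
Proof. by case: hH => _ [_ [_ [_ [_ [hskew _]]]]]; apply: hskew. Qed.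

Lemma lsa_jacobi a b (x y z : H) : homog a x -> homog b y ->
  br x (br y z) = br (br x y) z + ((-1) ^+ (a && b) : F) *: br y (br x z).
Proof. by case: hH => _ [_ [_ [_ [_ [_ hjac]]]]]; apply: hjac. Qed.

Lemma homog_p0 (x : H) : homog false (p0 x).
Proof. by case: hH => _ [p0_idem _]; apply: p0_idem. Qed.

Lemma homog_subr_p0 (x : H) : homog true (x - p0 x).
Proof. by rewrite /homog /= (linB lsa_p0_lin) (homog_p0 x) subrr. Qed.

Lemma homog_addr_eq0 b (u v : H) :
  homog b u -> homog (~~ b) v -> u + v = 0 -> u = 0 /\ v = 0.
Proof.
move=> hu hv uv0; have := congr1 p0 uv0.
rewrite (linD lsa_p0_lin) (lin0 lsa_p0_lin).
case: b hu hv => /= -> ->; rewrite ?add0r ?addr0 => w0.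
  by rewrite w0 addr0 in uv0.
by rewrite w0 add0r in uv0.
Qed.

(* [central] only speaks of left brackets; the parity components [c_0, y] and [c_1, y] of
   [c, y] = 0 vanish separately, and super skew-symmetry turns them into [y, c] = 0. *)
Lemma lsa_br_central b (y c : H) : homog b y -> central c -> br y c = 0.
Proof.
move=> hy cc; have dec_c : c = p0 c + (c - p0 c) by rewrite addrC subrK.
have [c0y c1y] : br (p0 c) y = 0 /\ br (c - p0 c) y = 0.
  apply: (@homog_addr_eq0 b).
  - by have := lsa_br_homog (homog_p0 c) hy.
  - by have := lsa_br_homog (homog_subr_p0 c) hy.
  - by rewrite -(linD (lsa_brl_lin y)) -dec_c.
rewrite dec_c (linD (lsa_brr_lin y)) (lsa_brC hy (homog_p0 c)).
by rewrite (lsa_brC hy (homog_subr_p0 c)) c0y c1y !scaler0 oppr0 addr0.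
Qed.

End LieSuperalgebra.

Section CommutatorCentral.
Variables (F : fieldType) (H : lsa_data F).
Hypothesis hH : is_lsa H.
Local Notation br := (@lsa_br F H).
Variables (a b c : bool) (X0 Y0 X1 Y1 : H).
Hypotheses (hX0 : homog a X0) (hY0 : homog b Y0) (hX1 : homog c X1).
Hypothesis commutator_congr : central (br X0 Y0 - br X1 Y1).

Lemma br_commutator_eq0 e (U : H) : homog e U ->
  central (br U X1) -> central (br U Y1) -> br U (br X0 Y0) = 0.
Proof.
move=> hU cUX1 cUY1; rewrite -[br X0 Y0](subrK (br X1 Y1)).
rewrite (linD (lsa_brr_lin hH U)) (lsa_br_central hH hU commutator_congr) add0r.
by rewrite (lsa_jacobi hH _ hU hX1) cUX1 (lsa_br_central hH hX1 cUY1) scaler0 addr0.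
Qed.

Lemma br_eq0_mod_center e (U W Z : H) (k : F) : homog e U ->
  br U Z = 0 -> central (W - k *: Z) -> br U W = 0.
Proof.
move=> hU UZ0 cW; rewrite -[W](subrK (k *: Z)) (linD (lsa_brr_lin hH U)).
by rewrite (lsa_br_central hH hU cW) (linZ (lsa_brr_lin hH U)) UZ0 scaler0 addr0.
Qed.

Hypotheses (cX0X1 : central (br X0 X1)) (cX0Y1 : central (br X0 Y1)).
Hypotheses (cY0X1 : central (br Y0 X1)) (cY0Y1 : central (br Y0 Y1)).
Hypothesis adX0 : forall w, exists k, central (br X0 w - k *: br X0 Y0).
Hypothesis adY0 : forall w, exists k, central (br Y0 w - k *: br X0 Y0).

Lemma commutator_central : central (br X0 Y0).
Proof.
move=> w; have [k cX0w] := adX0 w; have [l cY0w] := adY0 w.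
have X0Z : br X0 (br X0 Y0) = 0 := br_commutator_eq0 hX0 cX0X1 cX0Y1.
have Y0Z : br Y0 (br X0 Y0) = 0 := br_commutator_eq0 hY0 cY0X1 cY0Y1.
rewrite -(addrK (((-1) ^+ (a && b) : F) *: br Y0 (br X0 w)) (br _ w)).
rewrite -(lsa_jacobi hH _ hX0 hY0) (br_eq0_mod_center hX0 X0Z cY0w).
by rewrite (br_eq0_mod_center hY0 Y0Z cX0w) scaler0 subrr.
Qed.

End CommutatorCentral.

Section CentralCover.
Variables (F : fieldType) (H L : lsa_data F) (f : H -> L).
Hypotheses (hH : is_lsa H) (hf : is_lsa_hom f).
Hypothesis f_surj : forall u : L, exists x : H, f x = u.
Hypothesis f_ker : forall x : H, f x = 0 <-> central x.

Lemma lsa_hom_lin a (x y : H) : f (a *: x + y) = a *: f x + f y.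
Proof. by case: hf. Qed.

Lemma cover_lift_homog b (u : L) : homog b u -> exists2 X : H, homog b X & f X = u.
Proof.
have [_ f_p0 _] := hf; have [x fx] := f_surj u.
case: b => /= hu.
  exists (x - lsa_p0 x); first exact: homog_subr_p0.
  by rewrite (linB lsa_hom_lin) f_p0 fx hu subr0.
by exists (lsa_p0 x); [exact: homog_p0 | rewrite f_p0 fx].
Qed.

Lemma cover_central_subr (x y : H) : f x = f y -> central (x - y).
Proof. by move=> fxy; apply/f_ker; rewrite (linB lsa_hom_lin) fxy subrr. Qed.

End CentralCover.

Lemma eq_inord n a b : (a <= n)%N -> (b <= n)%N ->
  ((inord a : 'I_n.+1) == inord b) = (a == b).
Proof. by move=> an bn; rewrite -val_eqE /= !inordK. Qed.

Section HmBasis.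
Variables (F : fieldType) (m : nat).
Local Notation Hm := (Hm F m).
Local Notation x := (Hm_x m). Local Notation y := (Hm_y m).

Definition Hm_e (i : 'I_(m.*2.+1)) : Hm := delta_mx 0 i.
Definition Hm_ex j := Hm_e (x j).
Definition Hm_ey j := Hm_e (y j).
Definition Hm_ez := Hm_e (Hm_z m).

Lemma Hm_eE i k : (Hm_e i : 'rV_ _) 0 k = (k == i)%:R.
Proof. by rewrite mxE eqxx. Qed.

Section Indices.
Variables (a b : nat).
Hypotheses (am : (a < m)%N) (bm : (b < m)%N).

Lemma Hm_x_eq : (x a == x b) = (a == b).
Proof. by rewrite eq_inord -?addnn; lia. Qed.

Lemma Hm_y_eq : (y a == y b) = (a == b).
Proof. by rewrite eq_inord -?addnn ?eqn_add2l; lia. Qed.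

Lemma Hm_xy_neq : (x a == y b) = false.
Proof. by rewrite eq_inord -?addnn; lia. Qed.

Lemma Hm_yx_neq : (y a == x b) = false.
Proof. by rewrite eq_inord -?addnn; lia. Qed.

End Indices.

Lemma Hm_br_exl a (v : Hm) : (a < m)%N -> Hm_br (Hm_ex a) v = v 0 (y a) *: Hm_ez.
Proof.
move=> am; congr (_ *: _); rewrite (bigD1 (Ordinal am)) //= big1 => [|j ja].
  by rewrite !Hm_eE Hm_x_eq // Hm_yx_neq // eqxx mul1r mul0r subr0 addr0.
have ne_ja : (j == a :> nat) = false by apply/negbTE.
by rewrite !Hm_eE Hm_x_eq ?Hm_yx_neq // ne_ja !mul0r subrr.
Qed.

Lemma Hm_br_eyl a (v : Hm) : (a < m)%N -> Hm_br (Hm_ey a) v = - v 0 (x a) *: Hm_ez.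
Proof.
move=> am; congr (_ *: _); rewrite (bigD1 (Ordinal am)) //= big1 => [|j ja].
  by rewrite !Hm_eE Hm_y_eq // Hm_xy_neq // eqxx mul1r mul0r sub0r addr0.
have ne_ja : (j == a :> nat) = false by apply/negbTE.
by rewrite !Hm_eE Hm_y_eq ?Hm_xy_neq // ne_ja !mul0r subrr.
Qed.

Section Table.
Variables (a b : nat).
Hypotheses (am : (a < m)%N) (bm : (b < m)%N).

Lemma Hm_br_exx : Hm_br (Hm_ex a) (Hm_ex b) = 0.
Proof. by rewrite Hm_br_exl // Hm_eE Hm_yx_neq // scale0r. Qed.

Lemma Hm_br_exy : Hm_br (Hm_ex a) (Hm_ey b) = (a == b)%:R *: Hm_ez.
Proof. by rewrite Hm_br_exl // Hm_eE Hm_y_eq. Qed.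

Lemma Hm_br_eyx : Hm_br (Hm_ey a) (Hm_ex b) = - (a == b)%:R *: Hm_ez.
Proof. by rewrite Hm_br_eyl // Hm_eE Hm_x_eq. Qed.

Lemma Hm_br_eyy : Hm_br (Hm_ey a) (Hm_ey b) = 0.
Proof. by rewrite Hm_br_eyl // Hm_eE Hm_xy_neq // oppr0 scale0r. Qed.

End Table.

Lemma Hm_ex_even a : (a < m)%N -> homog false (Hm_ex a).
Proof.
move=> am; apply/rowP => i; rewrite !mxE eqxx /=; case: ifP => // im.
by case: eqP im => // ->; rewrite inordK -?addnn; lia.
Qed.

Lemma Hm_ey_odd a : (a < m)%N -> homog true (Hm_ey a).
Proof.
move=> am; apply/rowP => i; rewrite !mxE eqxx /=; case: ifP => // im.
by case: eqP im => // ->; rewrite inordK -?addnn; lia.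
Qed.

Lemma Hm_ez_neq0 : Hm_ez != 0.
Proof.
by apply/eqP => /rowP /(_ (Hm_z m)); rewrite Hm_eE mxE eqxx => /eqP; rewrite oner_eq0.
Qed.

Lemma Hm_br_line (u v : Hm) : exists k, Hm_br u v = k *: Hm_ez.
Proof. by eexists. Qed.

End HmBasis.

Lemma Hm_not_capable (F : fieldType) (m : nat) : (2 <= m)%N -> ~ capable (Hm F m).
Proof.
move=> m_ge2 [H [f [hH hf f_surj f_ker]]]; have [_ _ f_br] := hf.
have m_gt0 : (0 < m)%N by lia.
have m_gt1 : (1 < m)%N by lia.
have [X0 hX0 fX0] := cover_lift_homog hH hf f_surj (Hm_ex_even F m_gt0).
have [Y0 hY0 fY0] := cover_lift_homog hH hf f_surj (Hm_ey_odd F m_gt0).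
have [X1 hX1 fX1] := cover_lift_homog hH hf f_surj (Hm_ex_even F m_gt1).
have [Y1 fY1] := f_surj (Hm_ey F m 1).
have fZ : f (lsa_br X0 Y0) = Hm_ez F m.
  by rewrite f_br fX0 fY0 /= Hm_br_exy ?scale1r.
have central_of_f0 x : f x = 0 -> central x by move/f_ker.
have ad_line U w : exists k, central (lsa_br U w - k *: lsa_br X0 Y0).
  have [k fUw] := Hm_br_line (f U) (f w); exists k.
  apply: (cover_central_subr hf f_ker).
  by rewrite (linZ (lsa_hom_lin hf)) fZ f_br; exact: fUw.
apply: (negP (Hm_ez_neq0 F m)); rewrite -fZ; apply/eqP/f_ker.
apply: (commutator_central (Y1 := Y1) hH hX0 hY0 hX1 _ _ _ _ _ (ad_line X0) (ad_line Y0)).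
- by apply: (cover_central_subr hf f_ker); rewrite fZ f_br fX1 fY1 /= Hm_br_exy ?scale1r.
- by apply: central_of_f0; rewrite f_br fX0 fX1 /= Hm_br_exx.
- by apply: central_of_f0; rewrite f_br fX0 fY1 /= Hm_br_exy ?scale0r.
- by apply: central_of_f0; rewrite f_br fY0 fX1 /= Hm_br_eyx ?oppr0 ?scale0r.
- by apply: central_of_f0; rewrite f_br fY0 fY1 /= Hm_br_eyy.
Qed.

Section RowCoordinates.
Variables (F : fieldType) (n : nat).

Definition rco (u : 'rV[F]_n.+1) (k : nat) : F := u 0 (inord k).
Definition rvec (s : seq F) : 'rV[F]_n.+1 := \row_i s`_i.

Lemma rcoD u v k : rco (u + v) k = rco u k + rco v k.
Proof. by rewrite /rco mxE. Qed.
Lemma rcoN u k : rco (- u) k = - rco u k.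
Proof. by rewrite /rco mxE. Qed.
Lemma rcoZ a u k : rco (a *: u) k = a * rco u k.
Proof. by rewrite /rco mxE. Qed.
Lemma rco0 k : rco 0 k = 0.
Proof. by rewrite /rco mxE. Qed.
Definition rcoE := (rcoD, rcoN, rcoZ, rco0).

Lemma rco_rvec s k : (k < n.+1)%N -> rco (rvec s) k = s`_k.
Proof. by move=> kn; rewrite /rco mxE inordK. Qed.

Lemma rowP_rco u v : (forall k, (k < n.+1)%N -> rco u k = rco v k) -> u = v.
Proof. by move=> uv; apply/rowP => i; rewrite -[i]inord_val; apply: uv. Qed.

End RowCoordinates.

Ltac coordwise := apply: rowP_rco => -[|[|[|[|k]]]] // _; rewrite ?(rcoE, rco_rvec) //=.

Section Cover.
Variable F : fieldType.
Local Notation V := 'rV[F]_4.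

Definition Hcov_p0 (u : V) : V := rvec 3 [:: rco u 0; 0; 0; 0].
Definition Hcov_br (u v : V) : V :=
  rvec 3 [:: 0; 0; rco u 0 * rco v 1 - rco u 1 * rco v 0;
                   rco u 0 * rco v 2 - rco u 2 * rco v 0].
Definition Hcov : lsa_data F := @LSAData F V Hcov_p0 Hcov_br.

Lemma Hcov_brN u v : Hcov_br u v = - Hcov_br v u.
Proof. by coordwise; ring. Qed.

Lemma Hcov_jacobi u v w :
  Hcov_br u (Hcov_br v w) = Hcov_br (Hcov_br u v) w + Hcov_br v (Hcov_br u w).
Proof. by coordwise; ring. Qed.

Lemma Hcov_p0_br u v : Hcov_p0 (Hcov_br u v) = 0.
Proof. by coordwise. Qed.

Lemma Hcov_odd (u : Hcov) : homog true u -> rco u 0 = 0.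
Proof. by move/(congr1 (fun w => rco w 0)); rewrite rco_rvec ?rco0. Qed.

Lemma Hcov_even (u : Hcov) : homog false u ->
  [/\ rco u 1 = 0, rco u 2 = 0 & rco u 3 = 0].
Proof. by move=> hu; rewrite -hu /= !rco_rvec. Qed.

Lemma Hcov_br_odd (u v : V) : rco u 0 = 0 -> rco v 0 = 0 -> Hcov_br u v = 0.
Proof. by move=> u0 v0; coordwise; rewrite ?u0 ?v0; ring. Qed.

Lemma Hcov_br_even (u v : V) :
  rco u 1 = 0 -> rco u 2 = 0 -> rco v 1 = 0 -> rco v 2 = 0 -> Hcov_br u v = 0.
Proof. by move=> u1 u2 v1 v2; coordwise; rewrite ?u1 ?u2 ?v1 ?v2; ring. Qed.

Lemma Hcov_br_homog_eq0 b (u v : Hcov) : homog b u -> homog b v -> Hcov_br u v = 0.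
Proof.
case: b => [/Hcov_odd u0 /Hcov_odd v0 | /Hcov_even[u1 u2 _] /Hcov_even[v1 v2 _]].
  exact: Hcov_br_odd.
exact: Hcov_br_even.
Qed.

Lemma Hcov_is_lsa : is_lsa Hcov.
Proof.
split; [|split; [|split; [|split; [|split; [|split]]]]] => /=.
- by move=> a u v; coordwise; ring.
- by move=> u; coordwise.
- by move=> a u v w; coordwise; ring.
- by move=> a u v w; coordwise; ring.
- move=> a b u v hu hv; case: a b hu hv => -[] hu hv;
    by rewrite /homog /= Hcov_p0_br // (Hcov_br_homog_eq0 hu hv).
- move=> a b u v hu hv; case: (boolP (a && b)) => [/andP[a1 b1] | _]; last first.
    by rewrite scale1r -Hcov_brN.
  move: a1 b1 hu hv => -> -> hu hv.
  by rewrite (Hcov_br_homog_eq0 hu hv) (Hcov_br_homog_eq0 hv hu) scaler0 oppr0.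
- move=> a b u v w hu hv; case: (boolP (a && b)) => [/andP[a1 b1] | _]; last first.
    by rewrite scale1r Hcov_jacobi.
  move: a1 b1 hu hv => -> -> hu hv.
  have u_vw := Hcov_br_homog_eq0 hu (Hcov_p0_br v w).
  have v_uw := Hcov_br_homog_eq0 hv (Hcov_p0_br u w).
  by move: (Hcov_jacobi u v w); rewrite u_vw v_uw scaler0 !addr0.
Qed.

End Cover.

Section HmCoordinates.
Variables (F : fieldType) (m : nat).

Lemma rco_Hm_p0 (u : Hm F m) k : (k < m.*2.+1)%N ->
  rco (Hm_p0 u) k = if (k < m)%N then rco u k else 0.
Proof. by move=> km; rewrite /rco mxE inordK. Qed.

Lemma rco_Hm_br (u v : Hm F m) k : (k < m.*2.+1)%N ->
  rco (Hm_br u v) k =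
    (\sum_(j < m) (rco u j * rco v (m + j) - rco u (m + j) * rco v j)) * (k == m.*2)%:R.
Proof. by move=> km; rewrite /rco /Hm_z !mxE eq_inord -?addnn //; lia. Qed.

End HmCoordinates.

Section H1Capable.
Variable F : fieldType.

Lemma rco_H1_br (u v : Hm F 1) k : (k < 3)%N ->
  rco (Hm_br u v) k = (rco u 0 * rco v 1 - rco u 1 * rco v 0) * (k == 2)%:R.
Proof. by move=> k3; rewrite rco_Hm_br // big_ord1. Qed.

Definition Hcov_proj (u : Hcov F) : Hm F 1 := rvec 2 [:: rco u 0; rco u 1; rco u 2].

Lemma Hcov_proj_hom : is_lsa_hom Hcov_proj.
Proof.
split=> [a u v | u | u v] /=; first by coordwise; ring.
  by apply: rowP_rco => -[|[|[|k]]] // _; rewrite rco_Hm_p0 // !rco_rvec.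
by apply: rowP_rco => -[|[|[|k]]] // _; rewrite rco_H1_br // !rco_rvec //=; ring.
Qed.

Lemma Hcov_proj_surj (v : Hm F 1) : exists u, Hcov_proj u = v.
Proof.
exists (rvec 3 [:: rco v 0; rco v 1; rco v 2; 0]).
by apply: rowP_rco => -[|[|[|k]]] // _; rewrite !rco_rvec.
Qed.

Lemma Hcov_proj_eq0 u : Hcov_proj u = 0 <-> [/\ rco u 0 = 0, rco u 1 = 0 & rco u 2 = 0].
Proof.
split=> [u0 | [u0 u1 u2]].
  have co k : (k < 3)%N -> rco u k = 0.
    move=> k3; have := congr1 ((@rco F 2)^~ k) u0.
    by rewrite rco_rvec // rco0; case: k k3 => [|[|[|]]].
  by split; apply: co.
by apply: rowP_rco => -[|[|[|k]]] // _; rewrite rco_rvec ?rco0.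
Qed.

Lemma Hcov_centralP (u : Hcov F) : central u <-> [/\ rco u 0 = 0, rco u 1 = 0 & rco u 2 = 0].
Proof.
split=> [cu | [u0 u1 u2] v /=]; last by coordwise; rewrite ?u0 ?u1 ?u2; ring.
have := congr1 ((@rco F 3)^~ 2%N) (cu (rvec 3 [:: 0; 1; 0; 0])).
have := congr1 ((@rco F 3)^~ 2%N) (cu (rvec 3 [:: 1; 0; 0; 0])).
have := congr1 ((@rco F 3)^~ 3%N) (cu (rvec 3 [:: 1; 0; 0; 0])).
rewrite /= !rco_rvec //= !(rco0, mulr0, mulr1, subr0, sub0r) => /eqP + /eqP + u0.
by rewrite !oppr_eq0 => /eqP u2 /eqP u1.
Qed.

Lemma Hm1_capable : capable (Hm F 1).
Proof.
exists (Hcov F), Hcov_proj; split.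
- exact: Hcov_is_lsa.
- exact: Hcov_proj_hom.
- exact: Hcov_proj_surj.
- by move=> u; split=> [/Hcov_proj_eq0/Hcov_centralP | /Hcov_centralP/Hcov_proj_eq0].
Qed.

End H1Capable.

Unset Implicit Arguments.
Set Strict Implicit.

Theorem mainTheorem5 (F : fieldType) (hF2 : 2%N \notin [pchar F])
  (hF3 : 3%N \notin [pchar F]) (m : nat) (hm : (1 <= m)%N) :
  capable (Hm F m) <-> m = 1%N.
Proof.
split=> [cap_m | ->]; last exact: Hm1_capable.
have [m_gt1 | m_le1] := ltnP 1 m; first by case: (Hm_not_capable m_gt1 cap_m).
by apply/eqP; rewrite eqn_leq m_le1 hm.
Qed.
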